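(* Let $G=\langle c,s\rangle$, $K$, $z$, $b^{(i)}$ and $\phi:H\to G$ be as in the context. Let $w=s^{\alpha_0}c^{\beta_1}s^{\alpha_1}c^{\beta_2}\cdots s^{\alpha_{n-1}}c^{\beta_n}s^{\alpha_n}$, where $n\ge1$, $\alpha_0,\ldots,\alpha_n,\beta_1,\ldots,\beta_n$ are integers, all nonzero except possibly $\alpha_0$ and $\alpha_n$. Put $\gamma=\sum_{i=0}^{n}\alpha_i$, $\gamma_j=\sum_{i=0}^{j-1}\alpha_i$ for $j=1,\ldots,n$, $B_i=\{j:\gamma_j=\gamma_i\}$, $\gamma_0=\max\{|\gamma_1|,\ldots,|\gamma_n|\}$, and $F=(c^{s^{\gamma_1}})^{\beta_1}\cdots(c^{s^{\gamma_n}})^{\beta_n}\in K^{\langle s\rangle}$, regarded as a function $\langle s\rangle\to K$. Then $w\in\phi(H)$ if and only if $\gamma=0$, $\sum_{j\in B_i}\beta_j=0$ for $i=1,\ldots,n$, $F(s^{\mu})=1$ for all integers $\mu\ne1$ with $|\mu|\le3\gamma_0$, and $F(s)\in\langle [z,b^{(i)}]\ :\ i\in\mathbb{N}\rangle$.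
   Context: Notation: $x^y=yxy^{-1}$, $[x,y]=xyx^{-1}y^{-1}$. For groups $A,B$, the wreath product $A\,\mathrm{Wr}\,B$ is the semidirect product $A^B\rtimes B$, where $A^B$ is the group of all functions $B\to A$ with pointwise multiplication and $B$ acts by $(bf)(x)=f(xb)$, written $f^b=bfb^{-1}$. $H$ is a group generated by a countable set $\{a^{(1)},a^{(2)},\ldots\}$. Let $Z=\langle z\rangle$ be infinite cyclic and $b^{(i)}\in H^Z$ with $b^{(i)}(z^k)=a^{(i)}$ if $k>0$ and $1$ otherwise; $K=\langle z,b^{(i)}\ (i\in\mathbb{N})\rangle\le H\,\mathrm{Wr}\,Z$. Let $\langle s\rangle$ be infinite cyclic and $c\in K^{\langle s\rangle}$ with $c(s)=z$, $c(s^{2^i})=b^{(i)}$ for $i>0$, $c(s^k)=1$ otherwise; $G=\langle c,s\rangle\le K\,\mathrm{Wr}\,\langle s\rangle$. The map $\phi:H\to G$, $a^{(i)}\mapsto[c,c^{s^{2^i-1}}]$, is an injective homomorphism. *)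

(* Possibly infinite groups are encoded by hand. *)
From mathcomp Require Import all_boot all_order all_algebra.
Set Implicit Arguments. Unset Strict Implicit. Unset Printing Implicit Defensive.
Import Order.TTheory GRing.Theory Num.Theory.
Local Open Scope ring_scope.

Record IGroup := {
  gcar :> Type;
  gmul : gcar -> gcar -> gcar;
  ginv : gcar -> gcar;
  gone : gcar;
  gmulA : forall x y z, gmul x (gmul y z) = gmul (gmul x y) z;
  gmul1x : forall x, gmul gone x = x;
  gmulVx : forall x, gmul (ginv x) x = gone }.

Section Ops.
Variables (T : Type) (mul : T -> T -> T) (inv : T -> T) (one : T).

Fixpoint gpown (x : T) (n : nat) : T :=
  match n with O => one | S n' => mul x (gpown x n') end.

Definition gpowz (x : T) (k : int) : T :=
  match k with Posz n => gpown x n | Negz n => inv (gpown x n.+1) end.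

Definition gconj (x y : T) : T := mul (mul y x) (inv y).
Definition gcomm (x y : T) : T := mul (mul (mul x y) (inv x)) (inv y).

Inductive gen (S : T -> Prop) : T -> Prop :=
| gen_base x : S x -> gen S x
| gen_one : gen S one
| gen_mul x y : gen S x -> gen S y -> gen S (mul x y)
| gen_inv x : gen S x -> gen S (inv x).
End Ops.

(* Unrestricted wreath product A Wr Z with Z = <z> infinite cyclic, z^k <-> k.
   An element (f, m) stands for f * z^m with f : Z -> A (all functions).
   (b f)(x) = f(x b), so (f,m)(g,n) = (k |-> f k * g (k+m), m+n). *)
Section Wreath.
Variables (A : Type) (mA : A -> A -> A) (iA : A -> A) (eA : A).
Definition wr : Type := ((int -> A) * int)%type.
Definition wmul (x y : wr) : wr :=
  (fun k => mA (x.1 k) (y.1 (k + x.2)), x.2 + y.2).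
Definition winv (x : wr) : wr := (fun k => iA (x.1 (k - x.2)), - x.2).
Definition wone : wr := (fun _ => eA, 0).
End Wreath.

Section Construction.
Variables (H : IGroup) (a : nat -> H).   (* a i = a^(i), used for i >= 1 *)

Definition A2 : Type := wr H.
Definition m2 : A2 -> A2 -> A2 := wmul (@gmul H).
Definition i2 : A2 -> A2 := winv (@ginv H).
Definition e2 : A2 := wone (gone H).

Definition zel : A2 := (fun _ => gone H, 1).
Definition bel (i : nat) : A2 := (fun k => if 0 < k then a i else gone H, 0).

(* (H Wr Z) Wr <s>; K Wr <s> is the subgroup of functions into K *)
Definition W : Type := wr A2.
Definition mW : W -> W -> W := wmul m2.
Definition iW : W -> W := winv i2.
Definition eW : W := wone e2.

Definition sel : W := (fun _ => e2, 1).
(* c(s) = z, c(s^(2^i)) = b^(i) for i > 0, c(s^k) = 1 otherwise *)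
Definition cfun (k : int) : A2 :=
  if k == 1 then zel else
  match k with
  | Posz m => if (2 ^ trunc_log 2 m == m)%N then bel (trunc_log 2 m) else e2
  | Negz _ => e2
  end.
Definition cel : W := (cfun, 0).

Definition powW := gpowz mW iW eW.
Definition conjW := gconj mW iW.
Definition commW := gcomm mW iW.

(* w = s^a0 c^b1 s^a1 ... c^bj s^aj  (prefix up to index j) *)
Fixpoint wprefix (alpha beta : nat -> int) (j : nat) : W :=
  match j with
  | O => powW sel (alpha 0%N)
  | S j' => mW (mW (wprefix alpha beta j') (powW cel (beta j))) (powW sel (alpha j))
  end.

Definition gam (alpha : nat -> int) (j : nat) : int := \sum_(i < j) alpha i.

Fixpoint Fprod (alpha beta : nat -> int) (j : nat) : W :=
  match j with
  | O => eW
  | S j' => mW (Fprod alpha beta j') (powW (conjW cel (powW sel (gam alpha j))) (beta j))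
  end.

End Construction.

(* Each generator a^(i) is sent by phi to the function supported at s with value
   [z, b^(i)]: the support {s} U {s^(2^t) : t > 0} of c meets its translate by
   2^i - 1 only at s, because 2^t + 2^i - 1 is odd and at least 3.  As the a^(i)
   generate H, phi(H) consists of the functions supported at s with value in
   C = <[z, b^(i)]>.  Writing w = F s^gamma, membership thus means gamma = 0,
   F trivial off s and F(s) in C.  The z-exponent of F(s^mu) is the sum of the
   beta_j with gamma_j = 1 - mu, which gives the block conditions.  Conversely,
   for |mu| > 3 gamma_0 all nontrivial factors of F(s^mu) are the same value of
   c, since two powers of two above 2 gamma_0 are more than 2 gamma_0 apart;
   so F(s^mu) is a power of that value with a block sum as exponent, hence 1. *)

From mathcomp Require Import all_boot all_order all_algebra zify.
From Stdlib Require Import FunctionalExtensionality Classical.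
Import Order.TTheory GRing.Theory Num.Theory.
Set Implicit Arguments. Unset Strict Implicit. Unset Printing Implicit Defensive.
Local Open Scope ring_scope.

Record group_laws (T : Type) (mul : T -> T -> T) (inv : T -> T) (one : T) : Prop :=
  GroupLaws {
    gl_mulA : associative mul;
    gl_mul1g : left_id one mul;
    gl_mulVg : left_inverse one inv mul }.

Lemma IGroup_laws (G : IGroup) : group_laws (@gmul G) (@ginv G) (gone G).
Proof. by split; [exact: gmulA | exact: gmul1x | exact: gmulVx]. Qed.

Section GroupLaws.
Variables (T : Type) (mul : T -> T -> T) (inv : T -> T) (one : T).
Hypothesis G : group_laws mul inv one.
Let mulA := gl_mulA G.
Let mul1 := gl_mul1g G.
Let mulV := gl_mulVg G.
Local Notation pz := (gpowz mul inv one).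

Lemma gl_mulgV : right_inverse one inv mul.
Proof.
move=> x; rewrite -{1}[mul x (inv x)]mul1 -(mulV (inv x)) -mulA (mulA (inv x)).
by rewrite mulV mul1 mulV.
Qed.

Lemma gl_mulg1 : right_id one mul.
Proof. by move=> x; rewrite -(mulV x) mulA gl_mulgV mul1. Qed.

Lemma gl_invg1 : inv one = one.
Proof. by rewrite -[LHS]mul1 gl_mulgV. Qed.

Lemma gl_mulg1_eq x y : mul x y = one -> inv x = y.
Proof. by move=> xy1; rewrite -[inv x]gl_mulg1 -xy1 mulA mulV mul1. Qed.

Lemma gl_invgM x y : inv (mul x y) = mul (inv y) (inv x).
Proof.
by apply: gl_mulg1_eq; rewrite -mulA [mul y _]mulA gl_mulgV mul1 gl_mulgV.
Qed.

Lemma gl_gpownSr x n : gpown mul one x n.+1 = mul (gpown mul one x n) x.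
Proof.
elim: n => [|n IH]; first by rewrite /= gl_mulg1 mul1.
by rewrite -[LHS]/(mul x (gpown mul one x n.+1)) {1}IH mulA.
Qed.

Lemma gl_gpowzS x k : pz x (k + 1) = mul (pz x k) x.
Proof.
case: k => [n|[|n]].
- by rewrite -PoszD addn1; exact: gl_gpownSr.
- by rewrite [Negz 0 + 1]/(0 : int) /= gl_mulg1 mulV.
have -> : Negz n.+1 + 1 = Negz n by rewrite !NegzE; lia.
by rewrite /= [in RHS]gl_invgM -[RHS]mulA mulV gl_mulg1.
Qed.

Lemma gl_gpowzB1 x k : pz x (k - 1) = mul (pz x k) (inv x).
Proof. by rewrite -{2}(subrK 1 k) gl_gpowzS -mulA gl_mulgV gl_mulg1. Qed.

Lemma gl_gpowzD x k l : pz x (k + l) = mul (pz x k) (pz x l).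
Proof.
elim/int_rec: l => [|n IH|n IH].
- by rewrite addr0 gl_mulg1.
- by rewrite -addn1 PoszD addrA !gl_gpowzS IH mulA.
- by rewrite -addn1 PoszD opprD addrA !gl_gpowzB1 IH mulA.
Qed.

Lemma gl_gpowz1 k : pz one k = one.
Proof.
have pown1 n : gpown mul one one n = one.
  by elim: n => [|n IH] //; rewrite -[LHS]/(mul one (gpown mul one one n)) IH mul1.
by case: k => n; rewrite /gpowz pown1 ?gl_invg1.
Qed.

Lemma gl_comm1g y : gcomm mul inv one y = one.
Proof. by rewrite /gcomm mul1 gl_invg1 gl_mulg1 gl_mulgV. Qed.

Lemma gl_commg1 x : gcomm mul inv x one = one.
Proof. by rewrite /gcomm gl_mulg1 gl_mulgV gl_invg1 mul1. Qed.

End GroupLaws.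

Section Morphism.
Variables (T : Type) (mul : T -> T -> T) (inv : T -> T) (one : T).
Variables (U : Type) (mul' : U -> U -> U) (inv' : U -> U) (one' : U).
Hypotheses (GT : group_laws mul inv one) (GU : group_laws mul' inv' one').
Variable f : T -> U.
Hypothesis fM : forall x y, f (mul x y) = mul' (f x) (f y).

Lemma gl_morph1 : f one = one'.
Proof.
have f1_idem : mul' (f one) (f one) = f one by rewrite -fM (gl_mul1g GT).
by rewrite -[LHS](gl_mul1g GU) -(gl_mulVg GU (f one)) -(gl_mulA GU) f1_idem.
Qed.

Lemma gl_morphV x : f (inv x) = inv' (f x).
Proof.
by apply/esym/(gl_mulg1_eq GU); rewrite -fM (gl_mulgV GT) gl_morph1.
Qed.

End Morphism.

Section Wreath.
Variables (A : Type) (mul : A -> A -> A) (inv : A -> A) (one : A).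
Hypothesis G : group_laws mul inv one.
Local Notation wm := (wmul mul).
Local Notation wi := (winv inv).
Local Notation we := (wone one).

Lemma wr_group_laws : group_laws wm wi we.
Proof.
split.
- move=> x y z; congr pair; last exact: addrA.
  by apply: functional_extensionality => k; rewrite (gl_mulA G) addrA.
- case=> f m; congr pair; last exact: add0r.
  by apply: functional_extensionality => k; rewrite (gl_mul1g G) addr0.
- case=> f m; congr pair; last exact: addNr.
  by apply: functional_extensionality => k; rewrite (gl_mulVg G).
Qed.

Lemma wmul_base f g : wm (f, 0) (g, 0) = (fun k => mul (f k) (g k), 0).
Proof. by congr pair; apply: functional_extensionality => k; rewrite addr0. Qed.

Lemma winv_base f : wi (f, 0) = (fun k => inv (f k), 0).
Proof. by congr pair; apply: functional_extensionality => k; rewrite subr0. Qed.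

Lemma wmul_shift x g : wm x (fun _ => one, g) = (x.1, x.2 + g).
Proof. by congr pair; apply: functional_extensionality => k; rewrite (gl_mulg1 G). Qed.

Lemma wconj_shift f g :
  gconj wm wi (f, 0) (fun _ => one, g) = (fun k => f (k + g), 0).
Proof.
rewrite /gconj /wmul /=; congr pair; last by rewrite addr0 addrN.
by apply: functional_extensionality => k; rewrite (gl_mul1g G) (gl_invg1 G) (gl_mulg1 G).
Qed.

Lemma wcomm_base f g :
  gcomm wm wi (f, 0) (g, 0) = (fun k => gcomm mul inv (f k) (g k), 0).
Proof. by rewrite /gcomm wmul_base winv_base wmul_base winv_base wmul_base. Qed.

Lemma wpowz_base f b :
  gpowz wm wi we (f, 0) b = (fun k => gpowz mul inv one (f k) b, 0).
Proof.
have pown n : gpown wm we (f, 0) n = (fun k => gpown mul one (f k) n, 0).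
  elim: n => [|n IH] //.
  by rewrite -[LHS]/(wm (f, 0) (gpown wm we (f, 0) n)) IH wmul_base.
by case: b => n; rewrite /gpowz pown ?winv_base.
Qed.

Lemma wpowz_shift g : gpowz wm wi we (fun _ => one, 1) g = (fun _ => one, g).
Proof.
have pown n : gpown wm we (fun _ => one, 1) n = (fun _ => one, n%:Z).
  elim: n => [|n IH] //.
  rewrite -[LHS]/(wm (fun _ => one, 1) (gpown wm we (fun _ => one, 1) n)) IH.
  by rewrite wmul_shift -addn1 PoszD addrC.
case: g => n; rewrite /gpowz pown //= NegzE.
by congr pair; apply: functional_extensionality => k; rewrite (gl_invg1 G).
Qed.

Lemma wpowz_snd x b : (gpowz wm wi we x b).2 = x.2 * b.
Proof.
have pown n : (gpown wm we x n).2 = x.2 *+ n.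
  by elim: n => [|n IH] //; rewrite -[LHS]/(x.2 + (gpown wm we x n).2) IH mulrS.
case: b => n; rewrite /gpowz.
- by rewrite pown -mulr_natr natz.
- by rewrite -[(wi _).2]/(- (gpown wm we x n.+1).2) pown -mulr_natr natz NegzE mulrN.
Qed.

End Wreath.

Definition c_support (k : int) : Prop := k = 1 \/ exists2 t, (0 < t)%N & k = (2 ^ t)%:Z.

Lemma c_support0 : ~ c_support 0.
Proof.
case=> [//|[t _ t0]]; have : (0 < 2 ^ t)%N by rewrite expn_gt0.
by rewrite -ltz_nat -t0.
Qed.

Lemma c_support_shift k i : k != 1 -> (0 < i)%N -> c_support k ->
  ~ c_support (k + ((2 ^ i)%:Z - 1)).
Proof.
(* [k + 2^i - 1] is odd and at least 3. *)
case: i => // i /eqP k1 _ [//|[[//|t] _ ->]].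
have t_pos : (0 < 2 ^ t)%N by rewrite expn_gt0.
have i_pos : (0 < 2 ^ i)%N by rewrite expn_gt0.
case=> [|[[//|u] _]]; rewrite !expnS; first lia.
have u_pos : (0 < 2 ^ u)%N by rewrite expn_gt0.
lia.
Qed.

Lemma c_support_far mu g g' (M : nat) : (3 * M < `|mu|)%N -> mu != 1 ->
  (`|g| <= M)%N -> (`|g'| <= M)%N ->
  c_support (mu + g) -> c_support (mu + g') -> g = g'.
Proof.
(* Both points are powers of two above [2 M], yet at most [2 M] apart. *)
move=> far /eqP mu1 g_le g'_le.
have not1 h : (`|h| <= M)%N -> mu + h <> 1 by move=> ? ?; lia.
case=> [/(not1 g g_le)//|[t _ e]] [/(not1 g' g'_le)//|[u _ e']].
have t_pos : (0 < 2 ^ t)%N by rewrite expn_gt0.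
have u_pos : (0 < 2 ^ u)%N by rewrite expn_gt0.
case: (ltngtP t u) => [tu|ut|tu]; last by move: e; rewrite tu; lia.
- have : (2 * 2 ^ t <= 2 ^ u)%N by rewrite -expnS leq_pexp2l.
  lia.
- have : (2 * 2 ^ u <= 2 ^ t)%N by rewrite -expnS leq_pexp2l.
  lia.
Qed.

Section Construction.
Variables (H : IGroup) (a : nat -> H).
Local Notation powA2 := (gpowz (@m2 H) (@i2 H) (e2 H)).

Lemma A2_laws : group_laws (@m2 H) (@i2 H) (e2 H).
Proof. exact: wr_group_laws (IGroup_laws H). Qed.

Lemma W_laws : group_laws (@mW H) (@iW H) (eW H).
Proof. exact: wr_group_laws A2_laws. Qed.

Lemma cfun1 : cfun a 1 = zel H.
Proof. by rewrite /cfun eqxx. Qed.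

Lemma cfun_exp2 i : (0 < i)%N -> cfun a (2 ^ i)%:Z = bel a i.
Proof.
move=> i_gt0; rewrite /cfun trunc_expnK // eqxx.
suff /negbTE -> : (2 ^ i)%:Z != 1 by [].
have : (1 < 2 ^ i)%N by rewrite -{1}(expn0 2) ltn_exp2l.
lia.
Qed.

Lemma cfun_support k : cfun a k = e2 H \/ c_support k.
Proof.
rewrite /cfun; case: eqP => [->|k1]; first by right; left.
case: k k1 => [m|m] k1; last by left.
case: eqP => [m_exp2|]; last by left.
right; right; exists (trunc_log 2 m); last by rewrite m_exp2.
by rewrite lt0n; apply/eqP => t0; apply: k1; rewrite -m_exp2 t0.
Qed.

Lemma cfun0 : cfun a 0 = e2 H.
Proof. by case: (cfun_support 0) => // /c_support0. Qed.

Lemma cfun_snd k : (cfun a k).2 = if k == 1 then 1 else 0.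
Proof. by rewrite /cfun; case: eqP => // _; case: k => // m; case: eqP. Qed.

Fixpoint Ffun (alpha beta : nat -> int) (j : nat) : int -> A2 H :=
  if j is j'.+1 then
    fun mu => m2 (Ffun alpha beta j' mu) (powA2 (cfun a (mu + gam alpha j)) (beta j))
  else fun _ => e2 H.

Lemma powW_sel g : powW (sel H) g = (fun _ => e2 H, g).
Proof. exact: (wpowz_shift A2_laws). Qed.

Lemma FprodE alpha beta j : Fprod a alpha beta j = (Ffun alpha beta j, 0).
Proof.
elim: j => [|j IH] //=.
rewrite IH powW_sel /conjW (wconj_shift A2_laws) /powW wpowz_base.
exact: wmul_base.
Qed.

Lemma gamS alpha j : gam alpha j.+1 = gam alpha j + alpha j.
Proof. by rewrite /gam big_ord_recr. Qed.

Lemma wprefixE alpha beta j :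
  wprefix a alpha beta j = (Ffun alpha beta j, gam alpha j.+1).
Proof.
elim: j => [|j IH] /=.
  by rewrite powW_sel /gam big_ord1.
rewrite IH /powW wpowz_base -/(powW _ _) powW_sel /mW (wmul_shift A2_laws) /=.
by rewrite addr0 -gamS.
Qed.

Lemma Ffun_snd alpha beta J mu :
  (Ffun alpha beta J mu).2 = \sum_(1 <= j < J.+1 | mu + gam alpha j == 1) beta j.
Proof.
elim: J => [|J IH]; first by rewrite big_geq.
rewrite big_mkcond big_nat_recr //= -big_mkcond -IH wpowz_snd cfun_snd.
by case: ifP; rewrite ?mul1r ?mul0r ?addr0.
Qed.

Lemma Ffun_collect alpha beta J mu P :
  (forall j, (1 <= j <= J)%N ->
     mu + gam alpha j = P \/ cfun a (mu + gam alpha j) = e2 H) ->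
  Ffun alpha beta J mu =
    powA2 (cfun a P) (\sum_(1 <= j < J.+1 | mu + gam alpha j == P) beta j).
Proof.
elim: J => [|J IH] collect; first by rewrite big_geq.
rewrite big_mkcond big_nat_recr //= -big_mkcond IH; last first.
  by move=> j /andP[j_ge1 j_le]; apply: collect; rewrite j_ge1 ltnW.
case: eqP => [->|neP]; first by rewrite (gl_gpowzD A2_laws).
have [/neP //|->] := collect J.+1 (leqnn _).
by rewrite (gl_gpowz1 A2_laws) (gl_mulg1 A2_laws) addr0.
Qed.

Lemma Ffun_block_sums alpha beta J i :
  (forall mu, (Ffun alpha beta J mu).2 = 0) ->
  \sum_(1 <= j < J.+1 | gam alpha j == gam alpha i) beta j = 0.
Proof.
move=> snd0; rewrite -[RHS](snd0 (1 - gam alpha i)) Ffun_snd.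
by apply: eq_bigl => j; rewrite addrAC subr_eq (inj_eq (addrI 1)).
Qed.

Lemma Ffun_far alpha beta J mu :
  (forall i, (1 <= i <= J)%N ->
     \sum_(1 <= j < J.+1 | gam alpha j == gam alpha i) beta j = 0) ->
  (3 * \max_(1 <= j < J.+1) `|gam alpha j|%N < `|mu|)%N -> mu != 1 ->
  Ffun alpha beta J mu = e2 H.
Proof.
move=> block0; set M := \max_(1 <= j < J.+1) _ => far mu1.
have gam_le j : (1 <= j <= J)%N -> (`|gam alpha j| <= M)%N.
  move=> j_in; apply: (leq_bigmax_seq (F := fun j => `|gam alpha j|%N)) => //.
  by rewrite mem_index_iota ltnS.
have [[i i_in supp_i]|no_supp] :=
  classic (exists2 i, (1 <= i <= J)%N & c_support (mu + gam alpha i)).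
- rewrite (@Ffun_collect _ _ _ _ (mu + gam alpha i)).
    by rewrite (eq_bigl _ _ (fun j => inj_eq (addrI mu) _ _)) block0.
  move=> j j_in; have [->|supp_j] := cfun_support (mu + gam alpha j); first by right.
  by left; rewrite (c_support_far far mu1 (gam_le j j_in) (gam_le i i_in) supp_j supp_i).
- rewrite (@Ffun_collect _ _ _ _ 0) ?cfun0 ?(gl_gpowz1 A2_laws) // => j j_in; right.
  have [//|supp_j] := cfun_support (mu + gam alpha j).
  by case: no_supp; exists j.
Qed.

Definition delta1 (x : A2 H) : int -> A2 H := fun k => if k == 1 then x else e2 H.

Local Notation in_Czb := (gen (@m2 H) (@i2 H) (e2 H)
  (fun x => exists2 i, (0 < i)%N & x = gcomm (@m2 H) (@i2 H) (zel H) (bel a i))).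

Lemma Czb_snd x : in_Czb x -> x.2 = 0.
Proof. by elim=> //= [_ [i _ ->] | y z _ -> _ -> | y _ ->]. Qed.

Lemma delta1_mul x y : mW (delta1 x, 0) (delta1 y, 0) = (delta1 (m2 x y), 0).
Proof.
rewrite /mW wmul_base; congr pair; apply: functional_extensionality => k.
by rewrite /delta1; case: ifP => // _; rewrite (gl_mul1g A2_laws).
Qed.

Lemma delta1_inv x : iW (delta1 x, 0) = (delta1 (i2 x), 0).
Proof.
rewrite /iW winv_base; congr pair; apply: functional_extensionality => k.
by rewrite /delta1; case: ifP => // _; rewrite (gl_invg1 A2_laws).
Qed.

Lemma delta1_one : (delta1 (e2 H), 0) = eW H.
Proof.
by congr pair; apply: functional_extensionality => k; rewrite /delta1; case: ifP.
Qed.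

Variable phi : H -> W H.
Hypothesis phi_hom : forall x y : H, phi (gmul x y) = mW (phi x) (phi y).
Hypothesis phi_a : forall i : nat, (0 < i)%N ->
  phi (a i) = commW (cel a) (conjW (cel a) (powW (sel H) ((2 ^ i)%:Z - 1))).

Lemma phi_a_delta1 i : (0 < i)%N ->
  phi (a i) = (delta1 (gcomm (@m2 H) (@i2 H) (zel H) (bel a i)), 0).
Proof.
move=> i_gt0; rewrite phi_a // powW_sel /conjW (wconj_shift A2_laws) /commW wcomm_base.
congr pair; apply: functional_extensionality => k; rewrite /delta1.
case: eqP => [->|/eqP k1]; first by rewrite cfun1 addrC subrK cfun_exp2.
have [->|supp_k] := cfun_support k; first exact: (gl_comm1g A2_laws).
have [->|supp_k'] := cfun_support (k + ((2 ^ i)%:Z - 1)).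
  exact: (gl_commg1 A2_laws).
by case: (c_support_shift k1 i_gt0 supp_k).
Qed.

Hypothesis Hgen : forall x : H,
  gen (@gmul H) (@ginv H) (gone H) (fun y => exists2 i, (0 < i)%N & y = a i) x.

Lemma im_phi w : (exists h, phi h = w) <-> exists2 x, in_Czb x & w = (delta1 x, 0).
Proof.
have phi1 := gl_morph1 (IGroup_laws H) W_laws phi_hom.
have phiV := gl_morphV (IGroup_laws H) W_laws phi_hom.
split=> [[h <-] | [x Cx ->]].
- elim: (Hgen h) => {h} [_ [i i_gt0 ->] | | x y _ [x' Cx' ex] _ [y' Cy' ey] |
                          x _ [x' Cx' ex]].
  + exists (gcomm (@m2 H) (@i2 H) (zel H) (bel a i)); last exact: phi_a_delta1.
    by apply: gen_base; exists i.
  + by exists (e2 H); [exact: gen_one | rewrite phi1 delta1_one].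
  + by exists (m2 x' y'); [exact: gen_mul | rewrite phi_hom ex ey delta1_mul].
  + by exists (i2 x'); [exact: gen_inv | rewrite phiV ex delta1_inv].
- elim: Cx => {x} [_ [i i_gt0 ->] | | x y _ [hx ex] _ [hy ey] | x _ [hx ex]].
  + by exists (a i); exact: phi_a_delta1.
  + by exists (gone H); rewrite phi1 delta1_one.
  + by exists (gmul hx hy); rewrite phi_hom ex ey delta1_mul.
  + by exists (ginv hx); rewrite phiV ex delta1_inv.
Qed.

End Construction.

Theorem lemma6
  (H : IGroup) (a : nat -> H)
  (Hgen : forall x : H,
     gen (@gmul H) (@ginv H) (gone H) (fun y => exists2 i, (0 < i)%N & y = a i) x)
  (phi : H -> W H)
  (phi_hom : forall x y : H, phi (gmul x y) = mW (phi x) (phi y))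
  (phi_a : forall i : nat, (0 < i)%N ->
     phi (a i) = commW (cel a) (conjW (cel a) (powW (sel H) ((2 ^ i)%:Z - 1))))
  (n : nat) (alpha beta : nat -> int)
  (hn : (1 <= n)%N)
  (halpha : forall i : nat, (0 < i < n)%N -> alpha i != 0)
  (hbeta : forall j : nat, (1 <= j <= n)%N -> beta j != 0) :
  (exists h : H, phi h = wprefix a alpha beta n) <->
  [/\ \sum_(i < n.+1) alpha i = 0,
      (forall i : nat, (1 <= i <= n)%N ->
         \sum_(1 <= j < n.+1 | gam alpha j == gam alpha i) beta j = 0),
      (forall mu : int, mu != 1 ->
         (`|mu|%N <= 3 * \max_(1 <= j < n.+1) `|gam alpha j|%N)%N ->
         (Fprod a alpha beta n).1 mu = e2 H)
    & gen (@m2 H) (@i2 H) (e2 H)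
        (fun x => exists2 i, (0 < i)%N & x = gcomm (@m2 H) (@i2 H) (zel H) (bel a i))
        ((Fprod a alpha beta n).1 1)].
Proof.
rewrite wprefixE FprodE /= (im_phi phi_hom phi_a Hgen).
set F := Ffun a alpha beta n; set M := \max_(1 <= j < n.+1) _.
split=> [[x Cx [F_delta gam0]] | [sum0 block0 near0 CF1]].
- have F_off mu : mu != 1 -> F mu = e2 H by rewrite F_delta /delta1 => /negbTE ->.
  have F1 : F 1 = x by rewrite F_delta /delta1 eqxx.
  split=> // [i _ | mu /F_off //|]; last by rewrite F1.
  apply: (Ffun_block_sums (a := a)) => mu; rewrite -/F.
  by have [->|/F_off ->] := eqVneq mu 1; first by rewrite F1 (Czb_snd Cx).
- exists (F 1) => //; congr pair; last exact: sum0.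
  apply: functional_extensionality => mu.
  rewrite /delta1; have [->|mu1] := eqVneq mu 1; first by [].
  have [/(near0 _ mu1) //|far] := leqP `|mu|%N (3 * M).
  exact: Ffun_far.
Qed.
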